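(* Consider the opinion--action model described in the context with $\phi\in(0,1)$ and arbitrary initial values $x_i(0),y_i(0)\in[0,1]$. Suppose there exists a finite time $T>0$ such that $\Theta(T)\neq\emptyset$ and for all integers $t\ge T$, $\Omega(t)=\Omega:=\Omega(T)$ and $\Theta(t)=\Theta:=\Theta(T)$. Then $z_i(t)=z_i(T)$ for all $i\in\Theta$ and all $t\ge T$, and $\lim_{t\to\infty}\mathrm{dist}\big(z_j(t),\operatorname{conv}\{z_i(T)\mid i\in\Theta\}\big)=0$ for all $j\in\Omega$.
   Context: Fix an integer $n\ge 1$, agent set $\mathcal{V}=\{1,\dots,n\}$, a confidence threshold $\epsilon\in[0,1]$ and a decision weight $\phi\in[0,1]$. Each agent $i$ has opinion $x_i(t)\in[0,1]$ and action $y_i(t)\in[0,1]$. For $t\in\mathbb{Z}_{\ge0}$ the model evolves by: $\mathcal{N}_i(t)=\{j\in\mathcal{V}\mid j\neq i,\ |x_i(t)-y_j(t)|\le\epsilon\}$; $x_i(t+1)=\frac{x_i(t)+\sum_{j\in\mathcal{N}_i(t)}y_j(t)}{|\mathcal{N}_i(t)|+1}$; $y_i(t+1)=\phi\,x_i(t+1)+(1-\phi)\,y_{\mathrm{avg}}(t)$ with $y_{\mathrm{avg}}(t)=\frac1n\sum_{k=1}^n y_k(t)$. For $t\ge1$ the augmented state is $\mathbf{z}(t)\in\mathbb{R}^{2n}$ with $z_i(t)=x_i(t)$ and $z_{n+i}(t)=y_i(t-1)$ for $i\in\mathcal{V}$ (indices $1,\dots,n$ are ''opinion nodes'', $n+1,\dots,2n$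 ''action nodes''). For $t\ge1$ define $\Theta(t)=\{i\in\{1,\dots,n\}\mid |\mathcal{N}_i(t)|=0\}$ and $\Omega(t)=\{n+1,\dots,2n\}\cup\{i\in\{1,\dots,n\}\mid |\mathcal{N}_i(t)|>0\}$. $\operatorname{conv}$ denotes convex hull and $\mathrm{dist}(x,S)=\inf_{y\in S}|x-y|$. *)

From HB Require Import structures.
From mathcomp Require Import all_boot all_order all_algebra.
From mathcomp Require Import all_classical all_reals topology normedtype sequences.
Set Implicit Arguments. Unset Strict Implicit. Unset Printing Implicit Defensive.
Import Order.TTheory GRing.Theory Num.Theory.
Local Open Scope ring_scope.
Local Open Scope classical_set_scope.

Section Model.
Variables (R : realType) (n : nat) (eps phi : R).

(* state at a time: (opinions x, actions y) *)
Definition state := (('I_n -> R) * ('I_n -> R))%type.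

Definition nbr (s : state) (i : 'I_n) : {set 'I_n} :=
  [set j | (j != i) && (`|s.1 i - s.2 j| <= eps)].

Definition yavg (s : state) : R := (\sum_(k < n) s.2 k) / n%:R.

Definition step (s : state) : state :=
  let x' := fun i => (s.1 i + \sum_(j in nbr s i) s.2 j) / (#|nbr s i|%:R + 1) in
  (x', fun i => phi * x' i + (1 - phi) * yavg s).

Definition traj (x0 y0 : 'I_n -> R) (t : nat) : state := iter t step (x0, y0).

Definition xs x0 y0 t i := (traj x0 y0 t).1 i.
Definition ys x0 y0 t i := (traj x0 y0 t).2 i.

Definition Nb x0 y0 t i := nbr (traj x0 y0 t) i.

(* augmented state z(t), t >= 1; index inl i = opinion node i,
   inr i = action node n+i *)
Definition z x0 y0 (t : nat) (k : 'I_n + 'I_n) : R :=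
  match k with inl i => xs x0 y0 t i | inr i => ys x0 y0 t.-1 i end.

Definition Theta x0 y0 t : {set 'I_n + 'I_n} :=
  [set k | if k is inl i then #|Nb x0 y0 t i| == 0%N else false].

Definition Omega x0 y0 t : {set 'I_n + 'I_n} :=
  [set k | if k is inl i then (0 < #|Nb x0 y0 t i|)%N else true].

End Model.

Definition conv (R : realType) (I : finType) (A : {set I}) (p : I -> R) : set R :=
  [set v | exists w : I -> R, (forall k, k \in A -> 0 <= w k) /\
     \sum_(k in A) w k = 1 /\ v = \sum_(k in A) w k * p k].

Definition dist (R : realType) (x : R) (S : set R) : R :=
  inf [set `|x - y| | y in S].

From HB Require Import structures.
From mathcomp Require Import all_boot all_order all_algebra.
From mathcomp Require Import all_classical all_reals topology normedtype sequences.
From mathcomp Require Import ring lra.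
Set Implicit Arguments. Unset Strict Implicit. Unset Printing Implicit Defensive.
Import Order.TTheory GRing.Theory Num.Theory numFieldNormedType.Exports.
Local Open Scope ring_scope.
Local Open Scope classical_set_scope.

(* Let A be the
   largest frozen opinion and B a bound on all opinions and actions at a time
   t >= T.  A frozen agent pulls its own action below B - phi (B - A), hence the
   mean action below B - phi (B - A) / n, hence every action one step later
   below B - h with h = (1 - phi) phi (B - A) / n; a further averaging step puts
   every opinion and action below B - h / 2.  So the excess over A contracts by
   the factor 1 - (1 - phi) phi / (2 n) every three steps.  Running the same
   argument on the negated trajectory squeezes all opinions and actions into
   the interval spanned by the frozen opinions, which is their convex hull. *)

Lemma sum_le_card (R : numDomainType) (I : finType) (S : {set I}) (F : I -> R) B :
  (forall i, F i <= B) -> \sum_(i in S) F i <= #|S|%:R * B.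
Proof.
move=> FB; apply: le_trans (ler_sum _ (fun i _ => FB i)) _.
by rewrite sumr_const mulr_natl.
Qed.

Definition mean (R : numFieldType) (n : nat) (f : 'I_n -> R) := (\sum_k f k) / n%:R.

Lemma meanN (R : numFieldType) (n : nat) (f : 'I_n -> R) :
  mean (fun k => - f k) = - mean f.
Proof. by rewrite /mean sumrN mulNr. Qed.

Section Mean.
Variables (R : realFieldType) (n : nat) (f : 'I_n -> R) (B : R).
Hypotheses (n_gt0 : (0 < n)%N) (f_le : forall k, f k <= B).

Lemma mean_le : mean f <= B.
Proof.
rewrite /mean ler_pdivrMr ?ltr0n // mulr_natr.
by apply: le_trans (ler_sum _ (fun k _ => f_le k)) _; rewrite sumr_const card_ord.
Qed.

Lemma mean_le_drop i0 d : f i0 <= B - d -> mean f <= B - d / n%:R.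
Proof.
move=> fi0; have n0 : 0 < n%:R :> R by rewrite ltr0n.
have : \sum_k (f k - B) <= - d.
  rewrite (bigD1 i0) //=; apply: le_trans (_ : f i0 - B <= - d); last by lra.
  by rewrite gerDl; apply: sumr_le0 => k _; rewrite subr_le0.
move=> sum_le; rewrite sumrB sumr_const card_ord -mulr_natr in sum_le.
rewrite /mean ler_pdivrMr // mulrBl divfK ?gt_eqF //; lra.
Qed.

End Mean.

Definition opinion_dynamics (R : numFieldType) (n : nat) (phi : R)
    (N : nat -> 'I_n -> {set 'I_n}) (X Y : nat -> 'I_n -> R) :=
  forall t i, X t.+1 i = (X t i + \sum_(j in N t i) Y t j) / (#|N t i|%:R + 1) /\
              Y t.+1 i = phi * X t.+1 i + (1 - phi) * mean (Y t).

Definition stable_isolation (n T : nat) (N : nat -> 'I_n -> {set 'I_n}) :=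
  forall t, (T <= t)%N -> forall i, (#|N t i| == 0%N) = (#|N T i| == 0%N).

Lemma opinion_dynamicsN (R : numFieldType) (n : nat) (phi : R)
    (N : nat -> 'I_n -> {set 'I_n}) (X Y : nat -> 'I_n -> R) :
  opinion_dynamics phi N X Y ->
  opinion_dynamics phi N (fun t i => - X t i) (fun t i => - Y t i).
Proof.
move=> dyn t i; have [-> ->] := dyn t i.
by rewrite meanN sumrN -opprD mulNr !mulrN opprD.
Qed.

Section UpperBound.
Variables (R : archiRealFieldType) (n : nat) (phi : R) (T : nat).
Variables (N : nat -> 'I_n -> {set 'I_n}) (X Y : nat -> 'I_n -> R).
Hypotheses (n_gt0 : (0 < n)%N) (phi01 : 0 < phi < 1).
Hypotheses (dyn : opinion_dynamics phi N X Y) (stable : stable_isolation T N).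

Let X_step t i := proj1 (dyn t i).
Let Y_step t i := proj2 (dyn t i).

Lemma isolated_opinion_const i :
  #|N T i| == 0%N -> forall t, (T <= t)%N -> X t i = X T i.
Proof.
move=> iso; elim=> [|t IH]; first by rewrite leqn0 => /eqP ->.
rewrite leq_eqVlt => /predU1P[<- // | /[!ltnS] Tt].
have /eqP/cards0_eq Nt0 : #|N t i| == 0%N by rewrite stable.
by rewrite X_step Nt0 big_set0 cards0 addr0 add0r divr1 IH.
Qed.

Lemma X_step_le t i B h : 0 <= h -> X t i <= B -> (forall j, Y t j <= B - h) ->
  X t.+1 i <= B - h * (#|N t i|%:R / (#|N t i|%:R + 1)).
Proof.
move=> h0 XB YB; have := sum_le_card (N t i) YB.
rewrite X_step; set k : R := #|N t i|%:R => sum_le.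
have k1 : 0 < k + 1 by rewrite ltr_wpDl.
rewrite ler_pdivrMr //.
have -> : (B - h * (k / (k + 1))) * (k + 1) = B + k * (B - h).
  by field; rewrite gt_eqF.
by rewrite lerD.
Qed.

Lemma Y_step_le t i u v : X t.+1 i <= u -> mean (Y t) <= v ->
  Y t.+1 i <= phi * u + (1 - phi) * v.
Proof.
have /andP[/ltW p0 p1] := phi01; move=> Xu mv.
by rewrite Y_step lerD // ler_wpM2l // subr_ge0 ltW.
Qed.

Definition below t B := (forall i, X t i <= B) /\ (forall i, Y t i <= B).

Lemma below_le t B B' : below t B -> B <= B' -> below t B'.
Proof.
by move=> [XB YB] BB'; split=> i; [exact: le_trans (XB i) _ | exact: le_trans (YB i) _].
Qed.

Lemma below_step t B : below t B -> below t.+1 B.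
Proof.
move=> [XB YB]; have X1 i : X t.+1 i <= B.
  have YB0 j : Y t j <= B - 0 by rewrite subr0.
  by have := X_step_le (lexx 0) (XB i) YB0; rewrite mul0r subr0.
split=> // i; have := Y_step_le (X1 i) (mean_le n_gt0 YB).
by have -> : phi * B + (1 - phi) * B = B by ring.
Qed.

Lemma below_from s B : below s B -> forall t, (s <= t)%N -> below t B.
Proof.
move=> bB; elim=> [|t IH]; first by rewrite leqn0 => /eqP <-.
by rewrite leq_eqVlt => /predU1P[<- // | /[!ltnS] /IH /below_step].
Qed.

Lemma below_exists t : exists B, below t B.
Proof.
exists (\big[Num.max/0]_i Num.max (X t i) (Y t i)).
by split=> i; apply: le_trans (le_bigmax _ _ i); rewrite le_max lexx ?orbT.
Qed.

Let c := (1 - phi) * phi / n%:R.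

Let c_gt0 : 0 < c.
Proof. by have /andP[p0 p1] := phi01; rewrite divr_gt0 ?mulr_gt0 ?subr_gt0 ?ltr0n. Qed.

Let c_le1 : c <= 1.
Proof.
have /andP[p0 p1] := phi01; rewrite ler_pdivrMr ?ltr0n // mul1r.
have : (1 - phi) * phi <= 1 * 1 by apply: ler_pM; lra.
by rewrite mul1r => /le_trans; apply; rewrite ler1n.
Qed.

Variables (A : R) (i0 : 'I_n).
Hypotheses (i0_isolated : #|N T i0| == 0%N)
           (isolated_le : forall i, #|N T i| == 0%N -> X T i <= A).

Lemma Y_below_after_two t B : (T <= t)%N -> below t B ->
  forall i, Y t.+2 i <= B - c * (B - A).
Proof.
move=> Tt bB i; have [XB1 YB1] := below_step bB.
have Y1i0 : Y t.+1 i0 <= B - phi * (B - A).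
  have -> : B - phi * (B - A) = phi * A + (1 - phi) * B by ring.
  apply: Y_step_le _ (mean_le n_gt0 bB.2).
  by rewrite isolated_opinion_const ?isolated_le ?(leq_trans Tt).
have := Y_step_le ((below_step (below_step bB)).1 i) (mean_le_drop n_gt0 YB1 Y1i0).
by have -> : phi * B + (1 - phi) * (B - phi * (B - A) / n%:R) = B - c * (B - A)
  by rewrite /c; ring.
Qed.

Lemma below_contract t B : (T <= t)%N -> A <= B -> below t B ->
  below t.+3 (B - c * (B - A) / 2).
Proof.
move=> Tt AB bB; set h := c * (B - A).
have h0 : 0 <= h by apply: mulr_ge0 (ltW c_gt0) _; rewrite subr_ge0.
have hBA : h <= B - A by rewrite -[leRHS]mul1r ler_wpM2r ?subr_ge0.
have Y2 : forall i, Y t.+2 i <= B - h := Y_below_after_two Tt bB.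
have X3 i : X t.+3 i <= B - h / 2.
  have Tt2 : (T <= t.+2)%N by do 2 apply: leqW.
  have [iso | k_gt0] := posnP #|N t.+2 i|.
    have isoT : #|N T i| == 0%N by rewrite -(stable Tt2) iso.
    rewrite isolated_opinion_const ?leqW //.
    by have := isolated_le isoT; lra.
  have k1 : 1 <= #|N t.+2 i|%:R :> R by rewrite ler1n.
  apply: le_trans (X_step_le h0 ((below_step (below_step bB)).1 i) Y2) _.
  rewrite lerD2l lerN2 ler_wpM2l // ler_pdivlMr ?ltr_wpDl //; lra.
have meanY2 : mean (Y t.+2) <= B - h / 2 by apply: mean_le => // k; have := Y2 k; lra.
split=> // i; have := Y_step_le (X3 i) meanY2.
by have -> : phi * (B - h / 2) + (1 - phi) * (B - h / 2) = B - h / 2 by ring.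
Qed.

Let q := 1 - c / 2.

Let q_ge0 : 0 <= q.
Proof. by have := c_le1; rewrite /q; lra. Qed.

Let q_lt1 : q < 1.
Proof. by have := c_gt0; rewrite /q; lra. Qed.

Lemma below_geometric D : 0 <= D -> below T (A + D) ->
  forall k, below (T + 3 * k)%N (A + q ^+ k * D).
Proof.
move=> D0 bD; elim=> [|k IH]; first by rewrite muln0 addn0 expr0 mul1r.
have AB : A <= A + q ^+ k * D by rewrite lerDl mulr_ge0 ?exprn_ge0.
have := below_contract (leq_addr _ _) AB IH.
by rewrite mulnSr addnA addn3 exprS /q; congr below; ring.
Qed.

Lemma eventually_below e : 0 < e -> exists M, forall t, (M <= t)%N -> below t (A + e).
Proof.
move=> e0; have [B bB] := below_exists T.
pose D := Num.max 0 (B - A).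
have D0 : 0 <= D by rewrite le_max lexx.
have bD : below T (A + D) by apply: below_le bB _; rewrite -lerBlDl le_max lexx orbT.
have normq : `|q| < 1 by rewrite ger0_norm.
have /cvgr0Pnorm_le/(_ _ (divr_gt0 e0 (ltr_wpDl D0 ltr01)))[K _ qK] := cvg_expr normq.
have {}qK : q ^+ K * D <= e.
  have := qK K (leqnn K); rewrite /= ger0_norm ?exprn_ge0 // ler_pdivlMr ?ltr_wpDl //.
  by apply: le_trans; rewrite ler_wpM2l ?exprn_ge0 ?lerDl.
exists (T + 3 * K)%N => t Kt.
by apply: below_le (below_from (below_geometric D0 bD K) Kt) _; rewrite lerD2l.
Qed.

End UpperBound.

Lemma eventually_between (R : archiRealFieldType) (n : nat) (phi : R) (T : nat)
    (N : nat -> 'I_n -> {set 'I_n}) (X Y : nat -> 'I_n -> R) (lo hi : R) (i0 : 'I_n) :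
  (0 < n)%N -> 0 < phi < 1 -> opinion_dynamics phi N X Y -> stable_isolation T N ->
  #|N T i0| == 0%N -> (forall i, #|N T i| == 0%N -> lo <= X T i <= hi) ->
  forall e, 0 < e -> exists M, forall t, (M <= t)%N -> forall i,
    lo - e <= X t i <= hi + e /\ lo - e <= Y t i <= hi + e.
Proof.
move=> n_gt0 phi01 dyn stable iso_i0 between e e0.
have [Mhi below_hi] := eventually_below n_gt0 phi01 dyn stable iso_i0
  (fun i iso => (andP (between i iso)).2) e0.
have lo_le i : #|N T i| == 0%N -> - X T i <= - lo.
  by move=> /between/andP[lo_X _]; rewrite lerN2.
have [Mlo below_lo] :=
  eventually_below n_gt0 phi01 (opinion_dynamicsN dyn) stable iso_i0 lo_le e0.
exists (maxn Mhi Mlo) => t; rewrite geq_max => /andP[/below_hi[Xhi Yhi] /below_lo[Xlo Ylo]] i.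
by have := Xhi i; have := Yhi i; have := Xlo i; have := Ylo i; lra.
Qed.

Section ConvexHull.
Variables (R : realType) (I : finType) (S : {set I}) (p : I -> R).

Lemma sum_indicator (F : I -> R) i :
  i \in S -> \sum_(k in S) (k == i)%:R * F k = F i.
Proof.
move=> Si; rewrite (bigD1 i) //= eqxx mul1r big1 ?addr0 // => k /andP[_ /negbTE->].
by rewrite mul0r.
Qed.

Lemma conv_segment i j l : i \in S -> j \in S -> 0 <= l <= 1 ->
  conv S p (l * p i + (1 - l) * p j).
Proof.
move=> Si Sj /andP[l0 l1]; pose w k := l * (k == i)%:R + (1 - l) * (k == j)%:R.
have sum_w F : \sum_(k in S) w k * F k = l * F i + (1 - l) * F j.
  under eq_bigr do rewrite mulrDl -!mulrA.
  by rewrite big_split -!mulr_sumr !sum_indicator.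
exists w; split=> [k _|]; first by rewrite addr_ge0 ?mulr_ge0 ?subr_ge0.
split; last by rewrite sum_w.
under eq_bigr do rewrite -[w _]mulr1.
by rewrite sum_w !mulr1 addrC subrK.
Qed.

Lemma conv_point i : i \in S -> conv S p (p i).
Proof.
move=> Si; have := conv_segment Si Si (l := 1).
by rewrite mul1r subrr mul0r addr0 ler01 lexx; apply.
Qed.

Lemma dist_conv_ge0 v i : i \in S -> 0 <= dist v (conv S p).
Proof.
move=> Si; apply: lb_le_inf; first by exists `|v - p i|, (p i); first exact: conv_point.
by move=> _ [y _ <-].
Qed.

Lemma dist_conv_le v y : conv S p y -> dist v (conv S p) <= `|v - y|.
Proof. by move=> Sy; apply: ge_inf; [exists 0 => _ [y' _ <-] | exists y]. Qed.

Lemma dist_conv_le_margin i j v e : i \in S -> j \in S -> 0 <= e ->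
  p i - e <= v <= p j + e -> dist v (conv S p) <= e.
Proof.
move=> Si Sj e0 /andP[lo_v v_hi].
have [v_le | pi_lt] := lerP v (p i).
  by apply: le_trans (dist_conv_le v (conv_point Si)) _; rewrite ler0_norm ?subr_le0 //; lra.
have [pj_le | v_lt] := lerP (p j) v.
  by apply: le_trans (dist_conv_le v (conv_point Sj)) _; rewrite ger0_norm ?subr_ge0 //; lra.
have pij : 0 < p j - p i by rewrite subr_gt0 (lt_trans pi_lt v_lt).
pose l := (v - p i) / (p j - p i).
have l01 : 0 <= l <= 1.
  by rewrite /l divr_ge0 ?ler_pdivrMr ?mul1r //; lra.
have := dist_conv_le v (conv_segment Sj Si l01).
have -> : l * p j + (1 - l) * p i = v by rewrite /l; field; rewrite gt_eqF.
by rewrite subrr normr0 => /le_trans; apply.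
Qed.

Lemma cvg_dist_conv i j (u : nat -> R) : i \in S -> j \in S ->
  (forall e, 0 < e -> exists M, forall t, (M <= t)%N -> p i - e <= u t <= p j + e) ->
  dist (u t) (conv S p) @[t --> \oo] --> 0.
Proof.
move=> Si Sj near_hull; apply/cvgr0Pnorm_le => e e0.
have [M ut] := near_hull e e0; exists M => // t /ut ut_e.
by rewrite ger0_norm ?(dist_conv_ge0 _ Si) // (dist_conv_le_margin Si Sj (ltW e0)).
Qed.

End ConvexHull.

Lemma traj_opinion_dynamics (R : realType) (n : nat) (eps phi : R) (x0 y0 : 'I_n -> R) :
  opinion_dynamics phi (Nb eps phi x0 y0) (xs eps phi x0 y0) (ys eps phi x0 y0).
Proof. by []. Qed.

Lemma Theta_stable_isolation (R : realType) (n : nat) (eps phi : R)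
    (x0 y0 : 'I_n -> R) (T : nat) :
  (forall t, (T <= t)%N -> Theta eps phi x0 y0 t = Theta eps phi x0 y0 T) ->
  stable_isolation T (Nb eps phi x0 y0).
Proof.
by move=> ThetaE t Tt i; move/setP/(_ (inl i)): (ThetaE t Tt); rewrite !inE.
Qed.

Theorem proposition3 (R : realType) (n : nat) (eps phi : R) (x0 y0 : 'I_n -> R)
  (T : nat) :
  (1 <= n)%N ->
  0 <= eps <= 1 ->
  0 < phi < 1 ->
  (forall i, 0 <= x0 i <= 1) ->
  (forall i, 0 <= y0 i <= 1) ->
  (0 < T)%N ->
  Theta eps phi x0 y0 T != finset.set0 ->
  (forall t : nat, (T <= t)%N ->
     Omega eps phi x0 y0 t = Omega eps phi x0 y0 T /\
     Theta eps phi x0 y0 t = Theta eps phi x0 y0 T) ->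
  (forall i, i \in Theta eps phi x0 y0 T -> forall t : nat, (T <= t)%N ->
     z eps phi x0 y0 t i = z eps phi x0 y0 T i) /\
  (forall j, j \in Omega eps phi x0 y0 T ->
     (fun t : nat => dist (z eps phi x0 y0 t j)
        (conv (Theta eps phi x0 y0 T) (z eps phi x0 y0 T))) @ \oo --> (0 : R)).
Proof.
move=> n_gt0 _ phi01 _ _ _ Theta_neq0 stableT.
have dyn := traj_opinion_dynamics eps phi x0 y0.
have stable := Theta_stable_isolation (fun t Tt => (stableT t Tt).2).
split=> [[i|i] /[!inE] // iso t Tt|j _]; first exact: isolated_opinion_const.
case/set0Pn: Theta_neq0 => -[i0|i0] /[!inE] // iso_i0.
pose iso i := #|Nb eps phi x0 y0 T i| == 0%N.
have [imin iso_min min_le] := arg_minP (P := iso) (xs eps phi x0 y0 T) iso_i0.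
have [imax iso_max max_ge] := arg_maxP (P := iso) (xs eps phi x0 y0 T) iso_i0.
have hull_T i : iso i ->
    xs eps phi x0 y0 T imin <= xs eps phi x0 y0 T i <= xs eps phi x0 y0 T imax.
  by move=> iso_i; apply/andP; split; [exact: min_le | exact: max_ge].
have near_hull := eventually_between n_gt0 phi01 dyn stable iso_i0 hull_T.
apply: (cvg_dist_conv (i := inl imin) (j := inl imax)); rewrite ?inE // => e e0.
have [M between] := near_hull e e0.
case: j => i /=.
  by exists M => t /between/(_ i)[].
by exists M.+1 => -[//|t] /[!ltnS] /between/(_ i)[].
Qed.
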